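(* Let $\mathcal O$ be the suboperad of $\mathrm{CNCB}$ generated by $a:=T_{bbb}$ and $r:=T_{ubu}$. Then $\mathcal O$ admits the presentation with generators $a,r$ of arity $2$ and the single relation $$r\circ_1 r=r\circ_2 r.$$ That is, $\mathcal O$ is isomorphic, via the morphism sending the generators to $a$ and $r$, to the quotient of the free operad on two binary generators by the operadic congruence generated by this relation.
   Context: For $n\ge2$, a bicoloured noncrossing configuration (BNC) of size $n$ is a regular polygon with vertices $1,\dots,n+1$ clockwise, together with disjoint sets of blue and red arcs among the arcs $(i,j)$, $1\le i<j\le n+1$. The arcs $(i,i+1)$ are the edges ($i$th edge), $(1,n+1)$ is the base, and the others are diagonals. Coloured arcs are pairwise noncrossing ($(i,j),(k,l)$ cross iff $i<k<j<l$ or $k<i<l<j$), and red arcs are diagonals. There is one BNC of size $1$, a blue segment, which is the unit. The operad $\mathrm{CNCB}$ has the BNCs as elements (arity = size). Its composition $\mathfrak C\circ_i\mathfrak D$ ($\mathfrak C$ of size $n$, $\mathfrak D$ of size $m$) glues the base of $\mathfrak D$ on the $i$th edge of $\mathfrak C$. Arcs $(a,b)$ of $\mathfrak C$ become $(\sigma(a),\sigma(b))$ with $\sigma(v)=v$ for $v\le i$ and $v+m-1$ otherwise, and arcs $(a,b)$ of $\mathfrak D$ become $(a+i-1,b+i-1)$, keeping colours. The exception is the arc $(i,i+m)$, which is red if the $i$th edge of $\mathfrak C$ and the base of $\mathfrak D$ are both uncoloured, blue if both are blue, and uncoloured otherwise. For $x,y,z\in\{b,u\}$, $T_{xyz}$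 denotes the BNC of size $2$ (a triangle with vertices $1,2,3$) whose first edge $(1,2)$ has colour $x$, whose base $(1,3)$ has colour $y$, and whose second edge $(2,3)$ has colour $z$, where $b$ = blue and $u$ = uncoloured. The suboperad generated by a set is the smallest suboperad containing it. *)

From mathcomp Require Import all_boot.
Set Implicit Arguments. Unset Strict Implicit. Unset Printing Implicit Defensive.

Inductive colour := Ucol | Bcol | Rcol .

(** Arcs (i,j), 1 <= i < j <= n+1, of the polygon of size n, in
    lexicographic order. *)
Definition arcs (n : nat) : seq (nat * nat) :=
  [seq (i, j) | i <- iota 1 n.+1, j <- iota i.+1 (n.+1 - i)].

(** A (bicoloured noncrossing) configuration of size [bsize]: the list of
    colours of all arcs, in the order of [arcs bsize]. *)
Record bnc := Bnc { bsize : nat; bcols : seq colour }.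

(** Colour of the arc (i,j) ([Ucol] if (i,j) is not an arc). *)
Definition col (c : bnc) (i j : nat) : colour :=
  nth Ucol (bcols c) (index (i, j) (arcs (bsize c))).

Definition mk (n : nat) (f : nat -> nat -> colour) : bnc :=
  Bnc n [seq f p.1 p.2 | p <- arcs n].

(** The BNC property (noncrossing coloured arcs, red arcs are diagonals). *)
Definition coloured (x : colour) : bool := if x is Ucol then false else true.
Definition crossing (i j k l : nat) : bool :=
  ((i < k) && (k < j) && (j < l)) || ((k < i) && (i < l) && (l < j)).
Definition is_bnc (c : bnc) : Prop :=
  size (bcols c) = size (arcs (bsize c)) /\
  (forall i j, col c i j = Rcol -> 1 < j - i /\ ~ (i = 1 /\ j = (bsize c).+1)) /\
  (forall i j k l, coloured (col c i j) -> coloured (col c k l) ->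
      ~~ crossing i j k l).

Definition unitB : bnc := mk 1 (fun p q => if (p, q) == (1, 2) then Bcol else Ucol).

(** Triangle T_xyz: first edge (1,2) colour x, base (1,3) colour y,
    second edge (2,3) colour z. *)
Definition T (x y z : colour) : bnc :=
  mk 2 (fun p q => if (p, q) == (1, 2) then x
                   else if (p, q) == (1, 3) then y
                   else if (p, q) == (2, 3) then z else Ucol).

Definition gen_a : bnc := T Bcol Bcol Bcol.
Definition gen_r : bnc := T Ucol Bcol Ucol.

(** Colour of the glued arc (i,i+m): x = colour of the i-th edge of C,
    y = colour of the base of D. *)
Definition glue (x y : colour) : colour :=
  match x, y with
  | Ucol, Ucol => Rcol
  | Bcol, Bcol => Bcol
  | _, _ => Ucol
  end.

Definition ccomp (C : bnc) (i : nat) (D : bnc) : bnc :=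
  let n := bsize C in
  let m := bsize D in
  let sinv v := if v <= i then v else v + 1 - m in
  let inC v := (v <= i) || (i + m <= v) in
  mk (n + m - 1) (fun p q =>
    if (p, q) == (i, i + m) then glue (col C i i.+1) (col D 1 m.+1)
    else if (i <= p) && (q <= i + m) then col D (p + 1 - i) (q + 1 - i)
    else if inC p && inC q then col C (sinv p) (sinv q)
    else Ucol).

Inductive inO : bnc -> Prop :=
  | inO_unit : inO unitB
  | inO_a : inO gen_a
  | inO_r : inO gen_r
  | inO_comp : forall x y i, inO x -> inO y -> 1 <= i <= bsize x ->
      inO (ccomp x i y).

(** The free (nonsymmetric) operad on two binary generators a, r:
    planar binary trees with internal nodes labelled a or r. *)
Inductive tree := Leaf | NodeA of tree & tree | NodeR of tree & tree.

Fixpoint arity (t : tree) : nat :=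
  match t with
  | Leaf => 1
  | NodeA l r => arity l + arity r
  | NodeR l r => arity l + arity r
  end.

Fixpoint graft (t : tree) (i : nat) (s : tree) : tree :=
  match t with
  | Leaf => if i == 1 then s else Leaf
  | NodeA l r => if i <= arity l then NodeA (graft l i s) r
                 else NodeA l (graft r (i - arity l) s)
  | NodeR l r => if i <= arity l then NodeR (graft l i s) r
                 else NodeR l (graft r (i - arity l) s)
  end.

Definition t_a : tree := NodeA Leaf Leaf.
Definition t_r : tree := NodeR Leaf Leaf.

Fixpoint evalT (t : tree) : bnc :=
  match t with
  | Leaf => unitB
  | NodeA l r => ccomp (ccomp gen_a 2 (evalT r)) 1 (evalT l)
  | NodeR l r => ccomp (ccomp gen_r 2 (evalT r)) 1 (evalT l)
  end.

Inductive cong : tree -> tree -> Prop :=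
  | cong_rel : cong (graft t_r 1 t_r) (graft t_r 2 t_r)
  | cong_refl : forall t, cong t t
  | cong_sym : forall t s, cong t s -> cong s t
  | cong_trans : forall t s u, cong t s -> cong s u -> cong t u
  | cong_comp : forall t t' s s' i, cong t t' -> cong s s' ->
      1 <= i <= arity t -> cong (graft t i s) (graft t' i s').

From mathcomp Require Import all_boot zify.
Set Implicit Arguments. Unset Strict Implicit. Unset Printing Implicit Defensive.

(* The configuration evalT t is described arc by arc by tree_col: the arc
   spanning the leaves of a subtree is blue if that subtree is the whole tree
   or hangs from an a-node, uncoloured if it hangs from an r-node, and every
   other arc is uncoloured; in particular no red arc ever occurs, since all
   bases are blue.  This description commutes with grafting, so evalT is an
   operad morphism, onto O by construction.  The relation r o_1 r = r o_2 r
   is associativity of r, so every tree is congruent to one in which no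
   r-node has an r-node as left child, and such a tree is recovered from its
   blue arcs: the root is an a-node with left arity k iff the arcs over the
   first k and over the last n - k leaves are both blue; otherwise the root
   is an r-node whose left child is a leaf or an a-node, and the same test
   inside it recovers the left arity. *)

Lemma arity_gt0 t : 0 < arity t.
Proof. by elim: t => //= l IHl r IHr; rewrite addn_gt0 IHl. Qed.

Lemma arity_graft t i s :
  1 <= i <= arity t -> arity (graft t i s) = arity t + arity s - 1.
Proof.
have := arity_gt0 s.
elim: t i => [|l IHl r IHr|l IHl r IHr] i /= Hs Hi; first by rewrite (_ : i = 1) /=; lia.
all: have := arity_gt0 l; case: ifP => Hil /= Hl; [rewrite IHl | rewrite IHr]; lia.
Qed.

(* tree_col c t p q is the colour of the arc (p+1, q+1) of the configuration
   of t whose base is coloured c. *)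
Fixpoint tree_col (c : colour) (t : tree) (p q : nat) {struct t} : colour :=
  match t with
  | Leaf => if (p == 0) && (q == 1) then c else Ucol
  | NodeA l r => if (p == 0) && (q == arity l + arity r) then c
      else if q <= arity l then tree_col Bcol l p q
      else if arity l <= p then tree_col Bcol r (p - arity l) (q - arity l) else Ucol
  | NodeR l r => if (p == 0) && (q == arity l + arity r) then c
      else if q <= arity l then tree_col Ucol l p q
      else if arity l <= p then tree_col Ucol r (p - arity l) (q - arity l) else Ucol
  end.

Lemma tree_col_base c t : tree_col c t 0 (arity t) = c.
Proof. by case: t => //= *; rewrite eqxx. Qed.

Lemma tree_col_off_base c c' t p q :
  (p, q) != (0, arity t) -> tree_col c t p q = tree_col c' t p q.
Proof. by rewrite xpair_eqE; case: t => [|l r|l r] /= /negbTE ->. Qed.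

Lemma tree_col_neq_red c t p q : c <> Rcol -> tree_col c t p q <> Rcol.
Proof.
elim: t c p q => [|l IHl r IHr|l IHl r IHr] c p q Hc /=.
all: repeat case: ifP => _ //; by [apply: IHl | apply: IHr].
Qed.

(* Case analysis on every nat comparison guarding an innermost if, discarding
   the branches that are arithmetically impossible. *)
Ltac case_nat_ifs :=
  repeat (match goal with |- context [if ?b then _ else _] =>
    lazymatch b with
    | context [if _ then _ else _] => fail
    | context [?x <= ?y] => case: (boolP (x <= y)) => ?
    | context [?x == ?y] => case: (boolP (x == y)) => ?
    end end;
    rewrite /= ?andbT ?andbF ?orbT ?orbF; try (exfalso; lia)).

(* Closes an equation between tree_col terms whose arguments agree
   arithmetically, the base colours mattering only on the base arc. *)
Ltac tree_col_congr c :=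
  first [ done | lia
        | congr (tree_col _ _ _ _); lia
        | rewrite tree_col_base; done
        | apply: tree_col_off_base; rewrite xpair_eqE; lia
        | rewrite [LHS](@tree_col_off_base _ c); [congr (tree_col _ _ _ _); lia
                                                 | rewrite xpair_eqE; lia] ].

Lemma tree_col_graft c t v s p q :
  v < arity t -> p < q -> q <= arity t + arity s - 1 ->
  tree_col c (graft t v.+1 s) p q =
  if (p == v) && (q == v + arity s) then tree_col c t v v.+1
  else if (v <= p) && (q <= v + arity s) then tree_col c s (p - v) (q - v)
  else if ((p <= v) || (v + arity s <= p)) && ((q <= v) || (v + arity s <= q))
  then tree_col c t (if p <= v then p else p + 1 - arity s)
                    (if q <= v then q else q + 1 - arity s)
  else Ucol.
Proof.
have Hs := arity_gt0 s.
elim: t v c p q => [|l IHl r IHr|l IHl r IHr] v c p q /= Hv Hpq Hq.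
- have -> : v = 0 by lia.
  rewrite /= !subn0 add0n; case_nat_ifs; try tree_col_congr c.
  have [-> ->] : p = 0 /\ q = arity s by lia.
  exact: tree_col_base.
all: have Hl := arity_gt0 l; have Hr := arity_gt0 r.
all: case: ifP => Hvl /=; rewrite ?arity_graft; try lia.
all: try have -> : v.+1 - arity l = (v - arity l).+1 by lia.
all: case_nat_ifs.
all: try (rewrite IHl; try lia; case_nat_ifs).
all: try (rewrite IHr; try lia; case_nat_ifs).
all: tree_col_congr c.
Qed.

Lemma mem_arcs n p q : ((p, q) \in arcs n) = (0 < p < q) && (q <= n.+1).
Proof.
apply/allpairsPdep/idP => [[x [y [Hx Hy [-> ->]]]]|H].
  by move: Hx Hy; rewrite !mem_iota; lia.
by exists p, q; rewrite !mem_iota; split => //; lia.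
Qed.

Lemma col_mk n f p q :
  col (mk n f) p q = if (p, q) \in arcs n then f p q else Ucol.
Proof.
rewrite /col /=; case: ifP => H; first by rewrite (nth_map (0, 0)) ?index_mem ?nth_index.
by rewrite nth_default // size_map memNindex ?H.
Qed.

Lemma eq_mk n f g :
  (forall p q, (p, q) \in arcs n -> f p q = g p q) -> mk n f = mk n g.
Proof. by move=> efg; congr Bnc; apply/eq_in_map => -[p q] /efg. Qed.

Lemma glue_Bcol x : x <> Rcol -> glue x Bcol = x.
Proof. by case: x. Qed.

Definition tree_bnc (t : tree) : bnc :=
  mk (arity t) (fun p q => tree_col Bcol t p.-1 q.-1).

Lemma tree_bnc_graft t i s :
  1 <= i <= arity t -> tree_bnc (graft t i s) = ccomp (tree_bnc t) i (tree_bnc s).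
Proof.
move=> Hi; have Hs := arity_gt0 s.
rewrite /tree_bnc /ccomp /= arity_graft //; apply: eq_mk => p q; rewrite mem_arcs => Hpq.
rewrite !col_mk !mem_arcs.
case: i Hi => [|v] Hi; first lia.
rewrite tree_col_graft; try lia.
rewrite xpair_eqE; case_nat_ifs.
all: try by rewrite tree_col_base glue_Bcol //; apply: tree_col_neq_red.
all: by [| congr (tree_col _ _ _ _); lia].
Qed.

Lemma evalT_tree_bnc t : evalT t = tree_bnc t.
Proof.
elim: t => [|l IHl r IHr|l IHl r IHr] //=; rewrite IHl IHr.
- have -> : NodeA l r = graft (graft t_a 2 r) 1 l by [].
  by rewrite !tree_bnc_graft.
- have -> : NodeR l r = graft (graft t_r 2 r) 1 l by [].
  by rewrite !tree_bnc_graft.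
Qed.

Lemma bsize_evalT t : bsize (evalT t) = arity t.
Proof. by rewrite evalT_tree_bnc. Qed.

Lemma evalT_graft t i s :
  1 <= i <= arity t -> evalT (graft t i s) = ccomp (evalT t) i (evalT s).
Proof. by move=> Hi; rewrite !evalT_tree_bnc tree_bnc_graft. Qed.

Lemma inO_evalT x : inO x <-> exists t, evalT t = x.
Proof.
split=> [|[t <-]].
  elim=> [|||y z i _ [t <-] _ [s <-] Hi]; first by exists Leaf.
  - by exists t_a; vm_compute.
  - by exists t_r; vm_compute.
  by exists (graft t i s); rewrite evalT_graft // -bsize_evalT.
elim: t => [|l IHl r IHr|l IHl r IHr] /=; first exact: inO_unit.
  by apply: inO_comp => //; apply: inO_comp => //; exact: inO_a.
by apply: inO_comp => //; apply: inO_comp => //; exact: inO_r.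
Qed.

Lemma evalT_cong t1 t2 : cong t1 t2 -> evalT t1 = evalT t2.
Proof.
elim=> {t1 t2} [|t|t s _ ->|t s u _ -> _ ->|t t' s s' i _ Ht _ Hs Hi] //.
by rewrite !evalT_graft -?bsize_evalT -?Ht ?Hs // bsize_evalT.
Qed.

Definition is_NodeR (t : tree) : bool := if t is NodeR _ _ then true else false.

Fixpoint rcombed (t : tree) : bool :=
  match t with
  | Leaf => true
  | NodeA l r => rcombed l && rcombed r
  | NodeR l r => ~~ is_NodeR l && rcombed l && rcombed r
  end.

Fixpoint rnode (x y : tree) : tree :=
  if x is NodeR a b then NodeR a (rnode b y) else NodeR x y.

Fixpoint comb (t : tree) : tree :=
  match t with
  | Leaf => Leaf
  | NodeA l r => NodeA (comb l) (comb r)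
  | NodeR l r => rnode (comb l) (comb r)
  end.

Lemma rcombed_rnode x y : rcombed x -> rcombed y -> rcombed (rnode x y).
Proof.
elim: x => [|a _ b _|a _ b IHb] //= Nx Ny; rewrite ?Nx ?Ny //.
by case/andP: Nx => /andP[-> ->] /IHb ->.
Qed.

Lemma rcombed_comb t : rcombed (comb t).
Proof.
by elim: t => [|l IHl r IHr|l IHl r IHr] //=; [rewrite IHl IHr | exact: rcombed_rnode].
Qed.

Lemma cong_NodeA l l' r r' : cong l l' -> cong r r' -> cong (NodeA l r) (NodeA l' r').
Proof. by move=> Hl Hr; apply: (cong_comp (i := 1) (cong_comp (i := 2) (cong_refl t_a) Hr _) Hl). Qed.

Lemma cong_NodeR l l' r r' : cong l l' -> cong r r' -> cong (NodeR l r) (NodeR l' r').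
Proof. by move=> Hl Hr; apply: (cong_comp (i := 1) (cong_comp (i := 2) (cong_refl t_r) Hr _) Hl). Qed.

Lemma cong_NodeR_assoc a b c : cong (NodeR (NodeR a b) c) (NodeR a (NodeR b c)).
Proof.
have Hb := arity_gt0 b; have Hc := arity_gt0 c.
apply: (cong_comp (i := 1) (cong_comp (i := 2)
          (cong_comp (i := 3) cong_rel (cong_refl c) _) (cong_refl b) _) (cong_refl a)).
all: rewrite /=; lia.
Qed.

Lemma cong_rnode x y : cong (NodeR x y) (rnode x y).
Proof.
elim: x y => [|a _ b _|a _ b IHb] y /=; try exact: cong_refl.
exact: cong_trans (cong_NodeR_assoc a b y) (cong_NodeR (cong_refl a) (IHb y)).
Qed.

Lemma cong_comb t : cong t (comb t).
Proof.
elim: t => [|l IHl r IHr|l IHl r IHr] /=; first exact: cong_refl.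
  exact: cong_NodeA.
exact: cong_trans (cong_NodeR IHl IHr) (cong_rnode _ _).
Qed.

Section ChildArcs.
Variables (c : colour) (l r : tree) (p q : nat).

Lemma tree_col_NodeA_l : p < q <= arity l -> tree_col c (NodeA l r) p q = tree_col Bcol l p q.
Proof. by move=> Hpq; have Hr := arity_gt0 r; rewrite /=; case_nat_ifs. Qed.

Lemma tree_col_NodeR_l : p < q <= arity l -> tree_col c (NodeR l r) p q = tree_col Ucol l p q.
Proof. by move=> Hpq; have Hr := arity_gt0 r; rewrite /=; case_nat_ifs. Qed.

Lemma tree_col_NodeA_r : p < q <= arity r ->
  tree_col c (NodeA l r) (p + arity l) (q + arity l) = tree_col Bcol r p q.
Proof. by move=> Hpq; have Hl := arity_gt0 l; rewrite /=; case_nat_ifs; rewrite !addnK. Qed.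

Lemma tree_col_NodeR_r : p < q <= arity r ->
  tree_col c (NodeR l r) (p + arity l) (q + arity l) = tree_col Ucol r p q.
Proof. by move=> Hpq; have Hl := arity_gt0 l; rewrite /=; case_nat_ifs; rewrite !addnK. Qed.

End ChildArcs.

Lemma tree_col_NodeA_fork c l r :
  tree_col c (NodeA l r) 0 (arity l) = Bcol /\
  tree_col c (NodeA l r) (arity l) (arity l + arity r) = Bcol.
Proof.
have Hl := arity_gt0 l; have Hr := arity_gt0 r.
split; first by rewrite tree_col_NodeA_l ?tree_col_base // Hl leqnn.
have := @tree_col_NodeA_r c l r 0 (arity r).
by rewrite add0n addnC tree_col_base Hr leqnn; apply.
Qed.

Lemma blue_fork_NodeA c t k :
  0 < k < arity t -> tree_col c t 0 k = Bcol -> tree_col c t k (arity t) = Bcol ->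
  exists l r, t = NodeA l r /\ arity l = k.
Proof.
case: t => [|l r|l r] /= Hk; first lia.
all: have Hl := arity_gt0 l; have Hr := arity_gt0 r; case_nat_ifs => //.
all: try by exists l, r; split=> //; lia.
by rewrite (_ : k = arity l) ?tree_col_base //; lia.
Qed.

Lemma blue_fork_NodeR c a b k m :
  0 < k < m -> m < arity a + arity b ->
  tree_col c (NodeR a b) 0 k = Bcol -> tree_col c (NodeR a b) k m = Bcol -> m <= arity a.
Proof.
move=> Hkm Hm /=; have Ha := arity_gt0 a; have Hb := arity_gt0 b; case_nat_ifs => //.
all: by rewrite (_ : k = arity a) ?tree_col_base //; lia.
Qed.

Definition same_config c (t1 t2 : tree) :=
  arity t1 = arity t2 /\
  forall p q, p < q <= arity t1 -> tree_col c t1 p q = tree_col c t2 p q.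

Lemma same_config_sym c t1 t2 : same_config c t1 t2 -> same_config c t2 t1.
Proof. by case=> Ha Hcol; split=> // p q; rewrite -Ha => /Hcol. Qed.

Lemma same_config_NodeA c l1 r1 t2 : same_config c (NodeA l1 r1) t2 ->
  exists l2 r2, t2 = NodeA l2 r2 /\ arity l2 = arity l1.
Proof.
case=> /= Ha Hcol; have Hl := arity_gt0 l1; have Hr := arity_gt0 r1.
have [E1 E2] := tree_col_NodeA_fork c l1 r1.
apply: (blue_fork_NodeA (c := c)); first lia.
  by rewrite -Hcol //=; lia.
by rewrite -Ha -Hcol //=; lia.
Qed.

Lemma same_config_NodeA_children c l1 r1 l2 r2 :
  arity l1 = arity l2 -> same_config c (NodeA l1 r1) (NodeA l2 r2) ->
  same_config Bcol l1 l2 /\ same_config Bcol r1 r2.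
Proof.
move=> Hl [/= Ha Hcol]; split; split=> [|p q Hpq]; try lia.
  rewrite -(@tree_col_NodeA_l c l1 r1 p q) // -(@tree_col_NodeA_l c l2 r2 p q) -?Hl //.
  by apply: Hcol; rewrite /=; lia.
rewrite -(@tree_col_NodeA_r c l1 r1 p q) // -(@tree_col_NodeA_r c l2 r2 p q) -?Hl; last lia.
by apply: Hcol; rewrite /=; lia.
Qed.

Lemma same_config_NodeR_children c l1 r1 l2 r2 :
  arity l1 = arity l2 -> same_config c (NodeR l1 r1) (NodeR l2 r2) ->
  same_config Ucol l1 l2 /\ same_config Ucol r1 r2.
Proof.
move=> Hl [/= Ha Hcol]; split; split=> [|p q Hpq]; try lia.
  rewrite -(@tree_col_NodeR_l c l1 r1 p q) // -(@tree_col_NodeR_l c l2 r2 p q) -?Hl //.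
  by apply: Hcol; rewrite /=; lia.
rewrite -(@tree_col_NodeR_r c l1 r1 p q) // -(@tree_col_NodeR_r c l2 r2 p q) -?Hl; last lia.
by apply: Hcol; rewrite /=; lia.
Qed.

Lemma same_config_NodeR_lead c a1 b1 a2 b2 :
  ~~ is_NodeR a1 -> same_config c (NodeR a1 b1) (NodeR a2 b2) -> arity a1 <= arity a2.
Proof.
case: a1 => [|x y|//] _ [Ha Hcol]; first exact: arity_gt0.
have Hx := arity_gt0 x; have Hy := arity_gt0 y; have Hb := arity_gt0 b1.
have [Hfork1 Hfork2] := tree_col_NodeA_fork Ucol x y.
have Hsub p q : p < q <= arity x + arity y ->
    tree_col c (NodeR a2 b2) p q = tree_col Ucol (NodeA x y) p q.
  by move=> Hpq; rewrite -Hcol ?tree_col_NodeR_l //=; lia.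
move: Ha => /= Ha; apply: (@blue_fork_NodeR c a2 b2 (arity x)); try lia.
all: by rewrite Hsub //; lia.
Qed.

Lemma rcombed_same_config c t1 t2 :
  rcombed t1 -> rcombed t2 -> same_config c t1 t2 -> t1 = t2.
Proof.
elim: t1 t2 c => [|l1 IHl r1 IHr|a1 IHa b1 IHb] t2 c N1 N2 Ht.
- case: t2 {N2} Ht => // l r [/= Ha _];
    by have := arity_gt0 l; have := arity_gt0 r; lia.
- have [l2 [r2 [Et2 Hl]]] := same_config_NodeA Ht; subst t2.
  have [Hl' Hr'] := same_config_NodeA_children (esym Hl) Ht.
  case/andP: N1 => N1l N1r; case/andP: N2 => N2l N2r.
  by rewrite (IHl _ _ N1l N2l Hl') (IHr _ _ N1r N2r Hr').
- case: t2 N2 Ht => [|l2 r2|a2 b2] N2 Ht.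
  + by case: Ht => /= Ha _; have := arity_gt0 a1; have := arity_gt0 b1; lia.
  + by have [? [? []]] := same_config_NodeA (same_config_sym Ht).
  + case/andP: N1 => /andP[Na1 N1a] N1b; case/andP: N2 => /andP[Na2 N2a] N2b.
    have Ha : arity a1 = arity a2.
      apply/eqP; rewrite eqn_leq (same_config_NodeR_lead Na1 Ht).
      exact: (same_config_NodeR_lead Na2 (same_config_sym Ht)).
    have [Ha' Hb'] := same_config_NodeR_children Ha Ht.
    by rewrite (IHa _ _ N1a N2a Ha') (IHb _ _ N1b N2b Hb').
Qed.

Lemma tree_bnc_same_config t1 t2 : tree_bnc t1 = tree_bnc t2 -> same_config Bcol t1 t2.
Proof.
move=> E; have Ha : arity t1 = arity t2 := congr1 bsize E.
split=> // p q Hpq; move/(congr1 (fun x => col x p.+1 q.+1)): E.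
by rewrite !col_mk !mem_arcs /= -Ha !ltnS Hpq.
Qed.

Lemma cong_of_evalT t1 t2 : evalT t1 = evalT t2 -> cong t1 t2.
Proof.
move=> E; have Ecomb : comb t1 = comb t2.
  apply: (rcombed_same_config (c := Bcol)); rewrite ?rcombed_comb //.
  by apply: tree_bnc_same_config; rewrite -!evalT_tree_bnc -!(evalT_cong (cong_comb _)).
by apply: cong_trans (cong_comb t1) _; rewrite Ecomb; apply: cong_sym; apply: cong_comb.
Qed.

Theorem theorem3p18 :
  (forall t, bsize (evalT t) = arity t) /\
  (forall t i s, 1 <= i <= arity t ->
     evalT (graft t i s) = ccomp (evalT t) i (evalT s)) /\
  (forall x, inO x <-> exists t, evalT t = x) /\
  (forall t1 t2, evalT t1 = evalT t2 <-> cong t1 t2).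
Proof.
split; first exact: bsize_evalT.
split; first exact: evalT_graft.
split; first exact: inO_evalT.
by move=> t1 t2; split; [exact: cong_of_evalT | exact: evalT_cong].
Qed.
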